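(* For $r>0$, the sphere $\mathcal S_r=\{t\in V_N: S(t)=r\}$, regarded as a hypersurface in the quasi-Euclidean space $(V_N\setminus\{0\},n_{pq}(g;t))$ and equipped with the induced metric $\gamma$, is a space of constant curvature $h^2/r^2$: its Riemann curvature tensor equals $\frac{h^2}{r^2}(\gamma_{ik}\gamma_{jl}-\gamma_{il}\gamma_{jk})$.
   Context: Let $N\ge2$; points of $V_N=\mathbb{R}^N$ are $t=(t^1,\dots,t^N)$; indices $p,q$ run over $1,\dots,N$, repeated indices summed. $(r_{pq})$ is a symmetric positive-definite matrix with $r_{NN}=1$, $r_{Na}=0$ ($a<N$), and $S(t)=\sqrt{r_{pq}t^pt^q}$. Fix $g\in(-2,2)$, $h=\sqrt{1-g^2/4}$, $G=g/h$. The quasi-Euclidean metric tensor is $n_{pq}(g;t)=\frac1{h^2}r_{pq}-\frac14G^2L_pL_q$ with $L_p=r_{pq}t^q/S(t)$. *)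

From HB Require Import structures.
From mathcomp Require Import all_boot all_order all_algebra.
From mathcomp Require Import all_classical all_reals all_analysis.
Set Implicit Arguments. Unset Strict Implicit. Unset Printing Implicit Defensive.
Import Order.TTheory GRing.Theory Num.Theory.
Import numFieldNormedType.Exports.
Local Open Scope classical_set_scope.
Local Open Scope ring_scope.

Definition Sfun {R : realType} {N : nat} (rm : 'M[R]_N) (t : 'rV[R]_N) : R :=
  Num.sqrt (\sum_(p < N) \sum_(q < N) rm p q * t 0 p * t 0 q).

Definition hpar {R : realType} (g : R) : R := Num.sqrt (1 - g ^+ 2 / 4).
Definition Gpar {R : realType} (g : R) : R := g / hpar g.

Definition Lvec {R : realType} {N : nat} (rm : 'M[R]_N) (t : 'rV[R]_N) (p : 'I_N) : R :=
  (\sum_(q < N) rm p q * t 0 q) / Sfun rm t.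

Definition nmet {R : realType} {N : nat} (g : R) (rm : 'M[R]_N) (t : 'rV[R]_N)
  (p q : 'I_N) : R :=
  rm p q / hpar g ^+ 2 - (Gpar g) ^+ 2 / 4 * Lvec rm t p * Lvec rm t q.

Fixpoint Ck_on {R : realType} {m p : nat} (k : nat) (U : set 'rV[R]_m)
  (f : 'rV[R]_m -> 'rV[R]_p) : Prop :=
  match k with
  | 0 => forall u, U u -> {for u, continuous f}
  | k'.+1 => (forall u, U u -> differentiable f u) /\
             forall v : 'rV[R]_m, Ck_on k' U ('D_v f)
  end.

Definition smooth_on {R : realType} {m p : nat} (U : set 'rV[R]_m)
  (f : 'rV[R]_m -> 'rV[R]_p) : Prop := forall k, Ck_on k U f.

Definition ecoord {R : realType} {m : nat} (i : 'I_m) : 'rV[R]_m := delta_mx 0 i.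

Definition pd {R : realType} {m : nat} (i : 'I_m) (f : 'rV[R]_m -> R)
  (u : 'rV[R]_m) : R := 'D_(ecoord i) f u.

Definition dchart {R : realType} {m N : nat} (x : 'rV[R]_m -> 'rV[R]_N)
  (i : 'I_m) (u : 'rV[R]_m) : 'rV[R]_N := 'D_(ecoord i) x u.

Definition chart_jacobian {R : realType} {m N : nat} (x : 'rV[R]_m -> 'rV[R]_N)
  (u : 'rV[R]_m) : 'M[R]_(m, N) := \matrix_(i < m, p < N) dchart x i u 0 p.

Definition induced_metric {R : realType} {m N : nat} (g : R) (rm : 'M[R]_N)
  (x : 'rV[R]_m -> 'rV[R]_N) (u : 'rV[R]_m) (i j : 'I_m) : R :=
  \sum_(p < N) \sum_(q < N)
     nmet g rm (x u) p q * dchart x i u 0 p * dchart x j u 0 q.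

Definition metric_inv {R : realType} {m : nat}
  (gam : 'rV[R]_m -> 'I_m -> 'I_m -> R) (u : 'rV[R]_m) : 'M[R]_m :=
  invmx (\matrix_(i < m, j < m) gam u i j).

Definition christoffel {R : realType} {m : nat}
  (gam : 'rV[R]_m -> 'I_m -> 'I_m -> R) (i j k : 'I_m) (u : 'rV[R]_m) : R :=
  2^-1 * \sum_(l < m) metric_inv gam u i l *
     (pd j (fun w => gam w l k) u + pd k (fun w => gam w l j) u
      - pd l (fun w => gam w j k) u).

(* R^i_{jkl} = d_k Gamma^i_{lj} - d_l Gamma^i_{kj}
               + Gamma^i_{km} Gamma^m_{lj} - Gamma^i_{lm} Gamma^m_{kj},
   i.e. R(d_k,d_l) d_j = R^i_{jkl} d_i with R(X,Y) = [nabla_X,nabla_Y] - nabla_[X,Y];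
   lowered: R_{ijkl} = gam_{im} R^m_{jkl}. *)
Definition riemann {R : realType} {m : nat}
  (gam : 'rV[R]_m -> 'I_m -> 'I_m -> R) (i j k l : 'I_m) (u : 'rV[R]_m) : R :=
  \sum_(a < m) gam u i a *
    (pd k (fun w => christoffel gam a l j w) u
     - pd l (fun w => christoffel gam a k j w) u
     + \sum_(b < m) (christoffel gam a k b u * christoffel gam b l j u
                     - christoffel gam a l b u * christoffel gam b k j u)).

From HB Require Import structures.
From mathcomp Require Import all_boot all_order all_algebra.
From mathcomp Require Import all_classical all_reals all_analysis.
From mathcomp Require Import ring lra.
Import Order.TTheory GRing.Theory Num.Theory.
Import numFieldNormedType.Exports.
Local Open Scope classical_set_scope.
Local Open Scope ring_scope.
Set Implicit Arguments. Unset Strict Implicit. Unset Printing Implicit Defensive.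

(* Write <a, b> = r_pq a^p b^q and c = h^-2.  Along the chart S(x) = r, so
   <d_i x, x> = 0; hence L_p d_i x^p = 0, the G-term of n_pq drops out and the
   induced metric is gamma_ij = c <d_i x, d_j x>: the quasi-Euclidean sphere is
   the round sphere of radius r of the Euclidean space (V_N, < , >), with its
   metric scaled by c.  The Christoffel symbols of the first kind are then
   c <d_i x, d_j d_k x>, and since x spans the normal direction the Gauss formula
   d_i d_j x = Gamma^k_ij d_k x - r^-2 <d_i x, d_j x> x holds.  Differentiating
   the Christoffel symbols of the first kind, the third derivatives of x cancel by
   symmetry and only the normal part of the Gauss formula survives:
   R_ijkl = (c r^2)^-1 (gamma_ik gamma_jl - gamma_il gamma_jk).
   The symmetry of iterated partial derivatives (Schwarz) is proved by applying
   the mean value theorem to second differences. *)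

Section Schwarz.
Context {R : realType} {V : normedModType R}.
Implicit Types (f psi : V -> R) (u a b : V).

Lemma is_derive_line f (w a : V) (s0 : R) df :
  is_derive (s0 *: a + w) a f df -> is_derive s0 1 (fun s : R => f (s *: a + w)) df.
Proof.
move=> [fd <-].
have quotientE : (fun h : R => h^-1 *: (((fun s : R => f (s *: a + w)) \o shift s0) (h *: 1)
     - f (s0 *: a + w))) =
   (fun h => h^-1 *: ((f \o shift (s0 *: a + w)) (h *: a) - f (s0 *: a + w))).
  by apply/funext => h /=; rewrite -[h *: 1]/(h * 1) mulr1 scalerDl addrA.
apply: DeriveDef; first by rewrite /derivable quotientE.
by rewrite /derive quotientE.
Qed.

Lemma differentiable_remainder_le psi u : differentiable psi u ->
  forall e, 0 < e -> exists2 d, 0 < d & forall h, `|h| < d ->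
    `|psi (h + u) - psi u - 'd psi u h| <= e * `|h|.
Proof.
move=> /diff_locally /eqaddoP psi_u e e0.
have /nbhs_norm0P [d d0 Hd] := psi_u e e0.
by exists d => // h hd; have := Hd h hd; rewrite /= opprD addrA.
Qed.

Lemma near_norm_ball u (P : V -> Prop) : (\forall w \near u, P w) ->
  exists2 d, 0 < d & forall h, `|h| < d -> P (h + u).
Proof.
move=> /nbhs0P /nbhs_norm0P [d d0 Hd]; exists d => // h hd.
by rewrite addrC; apply: Hd.
Qed.

Lemma second_difference_mvt f psi u a b (t : R) : 0 < t ->
  (forall s, 0 <= s <= t ->
    is_derive (s *: a + (t *: b + u)) a f (psi (s *: a + (t *: b + u))) /\
    is_derive (s *: a + u) a f (psi (s *: a + u))) ->
  exists2 c, 0 <= c <= t &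
    f (t *: a + (t *: b + u)) - f (t *: a + u) - f (t *: b + u) + f u =
    t * (psi (c *: a + (t *: b + u)) - psi (c *: a + u)).
Proof.
move=> t0 fpsi.
pose g s := f (s *: a + (t *: b + u)) - f (s *: a + u).
pose dg s := psi (s *: a + (t *: b + u)) - psi (s *: a + u).
have g_dg s : 0 <= s <= t -> is_derive s 1 g (dg s).
  by move=> /fpsi[d1 d2]; apply: is_deriveB; apply: is_derive_line.
have [c cin gE] : exists2 c, c \in `[0, t]%R & g t - g 0 = dg c * (t - 0).
  apply: MVT_segment; first exact: ltW.
    by move=> s; rewrite in_itv /= => /andP[s0 st]; apply: g_dg; rewrite !ltW.
  apply: continuous_in_subspaceT => s; rewrite inE /= in_itv /= => /g_dg [dd _].
  exact/differentiable_continuous/derivable1_diffP.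
exists c; first by move: cin; rewrite in_itv.
have -> : t * dg c = g t - g 0 by rewrite gE subr0 mulrC.
by rewrite /g !scale0r !add0r; ring.
Qed.

Lemma second_difference_diff f psi u a b (t : R) : 0 < t ->
  (forall s, 0 <= s <= t ->
    is_derive (s *: a + (t *: b + u)) a f (psi (s *: a + (t *: b + u))) /\
    is_derive (s *: a + u) a f (psi (s *: a + u))) ->
  exists2 c, 0 <= c <= t &
    `|(f (t *: a + (t *: b + u)) - f (t *: a + u) - f (t *: b + u) + f u)
      - t ^+ 2 * 'd psi u b|
    <= t * (`|psi (c *: a + t *: b + u) - psi u - 'd psi u (c *: a + t *: b)|
            + `|psi (c *: a + u) - psi u - 'd psi u (c *: a)|).
Proof.
move=> t0 fpsi; have [c c_in ->] := second_difference_mvt t0 fpsi.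
exists c => //.
have -> : 'd psi u (c *: a + t *: b) = 'd psi u (c *: a) + t * 'd psi u b.
  by rewrite linearD; congr (_ + _); exact: linearZ.
have -> : t * (psi (c *: a + (t *: b + u)) - psi (c *: a + u)) - t ^+ 2 * 'd psi u b
    = t * ((psi (c *: a + t *: b + u) - psi u - ('d psi u (c *: a) + t * 'd psi u b))
           - (psi (c *: a + u) - psi u - 'd psi u (c *: a))).
  by rewrite !addrA; ring.
by rewrite normrM gtr0_norm // ler_wpM2l ?(ltW t0) // ler_normB.
Qed.

Lemma norm_segment_le (a b : V) (t s s' : R) : 0 <= s <= t -> 0 <= s' <= t ->
  `|s *: a + s' *: b| <= t * (`|a| + `|b|).
Proof.
move=> /andP[s0 st] /andP[s'0 s't]; apply: le_trans (ler_normD _ _) _.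
by rewrite !normrZ (ger0_norm s0) (ger0_norm s'0) mulrDr lerD // ler_wpM2r.
Qed.

Lemma second_difference_approx f psi u a b :
  (\forall w \near u, is_derive w a f (psi w)) -> differentiable psi u ->
  forall e, 0 < e -> exists2 d, 0 < d & forall t, 0 < t -> t < d ->
   `|(f (t *: a + (t *: b + u)) - f (t *: a + u) - f (t *: b + u) + f u)
      - t ^+ 2 * 'D_b psi u| <= e * t ^+ 2.
Proof.
move=> fpsi dpsi e e0; set M := `|a| + `|b|.
have M0 : 0 <= M by rewrite addr_ge0.
have C0 : 0 < 2 * M + 1 by rewrite ltr_wpDl ?mulr_ge0.
have [d1 d10 psi_approx] := differentiable_remainder_le dpsi (divr_gt0 e0 C0).
have [d2 d20 f_psi] := near_norm_ball fpsi.
exists (Num.min d1 d2 / (2 * M + 1)); first by rewrite divr_gt0 // lt_min d10.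
move=> t t0; rewrite ltr_pdivlMr // => tC; have tM : t * M <= t * (2 * M + 1).
  by rewrite ler_wpM2l ?(ltW t0) //; lra.
have ball s s' : 0 <= s <= t -> 0 <= s' <= t ->
    `|s *: a + s' *: b| < d1 /\ `|s *: a + s' *: b| < d2.
  move=> ss ss'; apply/andP; rewrite -lt_min.
  exact: le_lt_trans (norm_segment_le a b ss ss') (le_lt_trans tM tC).
have t_in : 0 <= t <= t by rewrite (ltW t0) /=.
have O_in : 0 <= (0 : R) <= t by rewrite lexx ltW.
have [|c c_in] := second_difference_diff (f := f) (psi := psi) (a := a) (b := b) (u := u) t0.
  move=> s s_in; rewrite addrA; split; apply: f_psi.
    exact: (ball s t s_in t_in).2.
  by have := (ball s 0 s_in O_in).2; rewrite scale0r addr0.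
have [/psi_approx Hab _] := ball c t c_in t_in.
have [] := ball c 0 c_in O_in; rewrite scale0r addr0 => /psi_approx Ha _.
rewrite deriveE // => /le_trans; apply.
apply: le_trans (ler_wpM2l (ltW t0) (lerD Hab Ha)) _.
have seg : `|c *: a + t *: b| + `|c *: a| <= t * (2 * M + 1).
  have := norm_segment_le a b c_in t_in; have := norm_segment_le a b c_in O_in.
  by rewrite scale0r addr0 -/M; lra.
rewrite -mulrDr; apply: le_trans (ler_wpM2l (ltW t0) (ler_wpM2l _ seg)) _.
  by rewrite divr_ge0 // ltW.
by rewrite le_eqVlt; apply/orP; left; apply/eqP; field; rewrite gt_eqF.
Qed.
Lemma derive_comm f psi phi u a b :
  (\forall w \near u, is_derive w a f (psi w)) ->
  (\forall w \near u, is_derive w b f (phi w)) ->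
  differentiable psi u -> differentiable phi u ->
  'D_b psi u = 'D_a phi u.
Proof.
move=> fpsi fphi dpsi dphi.
apply/eqP; rewrite -subr_eq0 -normr_le0; apply/ler_addgt0Pr => e e0.
rewrite add0r.
have e20 : 0 < e / 2 by rewrite divr_gt0.
have [d1 d10 H1] := second_difference_approx b fpsi dpsi e20.
have [d2 d20 H2] := second_difference_approx a fphi dphi e20.
set t := Num.min d1 d2 / 2.
have t0 : 0 < t by rewrite divr_gt0 // lt_min d10.
have : t < Num.min d1 d2 by rewrite /t ltr_pdivrMr // ltr_pMr // ?lt_min ?d10 // ltr1n.
rewrite lt_min => /andP[td1 td2].
have := H1 t t0 td1; have := H2 t t0 td2; rewrite [t *: b + (t *: a + u)]addrCA.
set X := 'D_b psi u; set Y := 'D_a phi u; set F := f (t *: a + (t *: b + u)).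
move=> HY HX.
have : `|t ^+ 2 * (X - Y)| <= e * t ^+ 2.
  have -> : t ^+ 2 * (X - Y) =
      (F - f (t *: b + u) - f (t *: a + u) + f u - t ^+ 2 * Y)
    - (F - f (t *: a + u) - f (t *: b + u) + f u - t ^+ 2 * X) by ring.
  apply: le_trans (ler_normB _ _) _; rewrite addrC.
  by apply: le_trans (lerD HX HY) _; rewrite -mulrDl -splitr.
by rewrite normrM ger0_norm ?exprn_ge0 ?(ltW t0) // mulrC ler_pM2r // exprn_gt0.
Qed.

End Schwarz.

Section Entries.
Context {R : realType} {V : normedModType R} {p q : nat}.
Implicit Types F : V -> 'M[R]_(p, q).

Lemma is_derive_entry F w v i j : derivable F w v ->
  is_derive w v (fun y => F y i j) ('D_v F w i j).
Proof.
move=> dF; apply: DeriveDef; first exact: (derivable_mxP F w v).1 dF i j.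
by rewrite derive_mx // mxE.
Qed.

Lemma differentiable_entry F w i j : differentiable F w ->
  differentiable (fun y => F y i j) w.
Proof.
move=> dF; have -> : (fun y => F y i j) = (fun M : 'M[R]_(p, q) => M i j) \o F by [].
by apply: differentiable_comp => //; exact: differentiable_coord.
Qed.

Lemma derive_comm_mx F u a b : (\forall w \near u, differentiable F w) ->
  differentiable ('D_a F) u -> differentiable ('D_b F) u ->
  'D_b ('D_a F) u = 'D_a ('D_b F) u.
Proof.
move=> dF dFa dFb; apply/matrixP => i j.
have dFab : derivable ('D_a F) u b by exact: diff_derivable.
have dFba : derivable ('D_b F) u a by exact: diff_derivable.
have [_ Eab] := is_derive_entry i j dFab; have [_ Eba] := is_derive_entry i j dFba.
apply: (etrans (esym Eab)); apply: (etrans _ Eba).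
have Fa : \forall w \near u, is_derive w a (fun y => F y i j) ('D_a F w i j).
  by apply: filterS dF => w dFw; apply: is_derive_entry; exact: diff_derivable.
have Fb : \forall w \near u, is_derive w b (fun y => F y i j) ('D_b F w i j).
  by apply: filterS dF => w dFw; apply: is_derive_entry; exact: diff_derivable.
by apply: derive_comm Fa Fb _ _; apply: differentiable_entry.
Qed.

End Entries.

Section BigDerive.
Context {R : realType} {V : normedModType R}.

Lemma is_derive_big_sum (I : Type) (r : seq I) (P : pred I) (F : I -> V -> R)
    (dF : I -> R) u v :
  (forall i, P i -> is_derive u v (F i) (dF i)) ->
  is_derive u v (fun w => \sum_(i <- r | P i) F i w) (\sum_(i <- r | P i) dF i).
Proof.
move=> FdF; rewrite -fct_sumE.
elim/big_rec2: _ => [|i f df Pi fdf]; first exact: is_derive_cst.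
exact: is_deriveD (FdF i Pi) fdf.
Qed.

Lemma derivable_big_sum (I : Type) (r : seq I) (P : pred I) (F : I -> V -> R) u v :
  (forall i, P i -> derivable (F i) u v) ->
  derivable (fun w => \sum_(i <- r | P i) F i w) u v.
Proof.
move=> dF; have [|] := @is_derive_big_sum I r P F (fun i => 'D_v (F i) u) u v => //.
by move=> i Pi; apply/derivableP/dF.
Qed.

Lemma derivable_big_prod (I : Type) (r : seq I) (P : pred I) (F : I -> V -> R) u v :
  (forall i, P i -> derivable (F i) u v) ->
  derivable (fun w => \prod_(i <- r | P i) F i w) u v.
Proof.
move=> dF; rewrite -fct_prodE.
elim/big_rec: _ => [|i f Pi df]; first exact: derivable_cst.
exact: derivableM (dF i Pi) df.
Qed.

Lemma derivable_det k (A : V -> 'M[R]_k) u v :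
  (forall i j, derivable (fun w => A w i j) u v) ->
  derivable (fun w => \det (A w)) u v.
Proof.
move=> dA; apply: derivable_big_sum => s _.
apply: derivableM; first exact: derivable_cst.
by apply: derivable_big_prod => i _; apply: dA.
Qed.

Lemma derivable_invmx k (A : V -> 'M[R]_k) u v a b :
  (\forall w \near u, A w \in unitmx) ->
  (forall i j, derivable (fun w => A w i j) u v) ->
  derivable (fun w => invmx (A w) a b) u v.
Proof.
move=> A_unit dA.
have invE : \forall w \near u, (\det (A w))^-1 * \adj (A w) a b = invmx (A w) a b.
  by near=> w; rewrite /invmx (_ : A w \in unitmx) ?mxE //; near: w.
apply: (near_eq_derivable invE); apply: derivableM.
  apply: derivableV; last exact: derivable_det.
  by have := nbhs_singleton A_unit; rewrite unitmxE unitfE.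
under eq_fun do rewrite mxE /cofactor.
apply: derivableM; first exact: derivable_cst.
by apply: derivable_det => i j; under eq_fun do rewrite !mxE; exact: dA.
Unshelve. all: by end_near.
Qed.

End BigDerive.

Definition ip {R : realType} {N : nat} (rm : 'M[R]_N) (a b : 'rV[R]_N) : R :=
  \sum_(p < N) \sum_(q < N) rm p q * a 0 p * b 0 q.

Section BilinearForm.
Context {R : realType} {N : nat} (rm : 'M[R]_N).
Implicit Types a b c : 'rV[R]_N.

Lemma ipE a b : (a *m rm *m b^T) 0 0 = ip rm a b.
Proof.
rewrite mxE; under eq_bigr => q _ do rewrite !mxE big_distrl /=.
by rewrite exchange_big; apply: eq_bigr => p _; apply: eq_bigr => q _ /=; ring.
Qed.

Lemma ip_sym a b : rm^T = rm -> ip rm a b = ip rm b a.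
Proof.
move=> rmT; rewrite /ip exchange_big; apply: eq_bigr => p _; apply: eq_bigr => q _.
by rewrite -[in RHS]rmT mxE; ring.
Qed.

Lemma ipDr a b c : ip rm a (b + c) = ip rm a b + ip rm a c.
Proof.
rewrite /ip -big_split; apply: eq_bigr => p _; rewrite -big_split.
by apply: eq_bigr => q _ /=; rewrite !mxE; ring.
Qed.

Lemma ipZr a b k : ip rm a (k *: b) = k * ip rm a b.
Proof.
rewrite /ip big_distrr; apply: eq_bigr => p _; rewrite big_distrr.
by apply: eq_bigr => q _ /=; rewrite !mxE; ring.
Qed.

Lemma ip0r a : ip rm a 0 = 0.
Proof. by rewrite -(scale0r 0) ipZr mul0r. Qed.

Lemma ipBr a b c : ip rm a (b - c) = ip rm a b - ip rm a c.
Proof. by rewrite ipDr -scaleN1r ipZr mulN1r. Qed.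

Lemma ip_sumr a k (F : 'I_k -> 'rV[R]_N) :
  ip rm a (\sum_(i < k) F i) = \sum_(i < k) ip rm a (F i).
Proof. exact: (big_morph (ip rm a) (ipDr a) (ip0r a)). Qed.

Lemma ip_row p q (A : 'M[R]_(p, N)) (B : 'M[R]_(q, N)) i j :
  (A *m rm *m B^T) i j = ip rm (row i A) (row j B).
Proof.
rewrite -ipE !mxE; apply: eq_bigr => l _; rewrite !mxE; congr (_ * _).
by apply: eq_bigr => m _; rewrite !mxE.
Qed.

Hypothesis rm_posdef : forall v, v != 0 -> 0 < ip rm v v.

Lemma unitmx_orth_eq0 (M : 'M[R]_N) (D : 'rV[R]_N) :
  M \in unitmx -> M *m rm *m D^T = 0 -> D = 0.
Proof.
move=> Munit MD0; have rmD0 : rm *m D^T = 0.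
  by rewrite -(mulKmx Munit (rm *m D^T)) (mulmxA M) MD0 mulmx0.
apply/eqP; apply: contraT => /rm_posdef.
by rewrite -ipE -mulmxA rmD0 mulmx0 mxE ltxx.
Qed.

Lemma row_free_of_ker0 p q (A : 'M[R]_(p, q)) :
  (forall z : 'rV_p, z *m A = 0 -> z = 0) -> row_free A.
Proof.
move=> A_inj; rewrite -kermx_eq0; apply/eqP/row_matrixP => i; rewrite row0.
by apply: A_inj; apply/sub_kermxP; exact: row_sub.
Qed.

Lemma gram_unit k (E : 'M[R]_(k, N)) : row_free E -> E *m rm *m E^T \in unitmx.
Proof.
move=> Efree; rewrite -row_free_unit; apply: row_free_of_ker0 => z zG0.
have zE0 : z *m E = 0.
  apply/eqP; apply: contraT => /rm_posdef; rewrite -ipE.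
  have -> : z *m E *m rm *m (z *m E)^T = z *m (E *m rm *m E^T) *m z^T.
    by rewrite trmx_mul !mulmxA.
  by rewrite zG0 mul0mx mxE ltxx.
by apply/eqP; rewrite -(mulmx_free_eq0 _ Efree); apply/eqP.
Qed.

End BilinearForm.

Lemma orthogonal_frame_eq0 {R : realType} {k : nat} (rm : 'M[R]_k.+1)
    (E : 'M[R]_(k, k.+1)) (y D : 'rV[R]_k.+1) :
  (forall v, v != 0 -> 0 < ip rm v v) -> row_free E -> ip rm y y != 0 ->
  (forall a, ip rm (row a E) y = 0) ->
  (forall a, ip rm (row a E) D = 0) -> ip rm y D = 0 -> D = 0.
Proof.
move=> rm_posdef Efree yy0 Ey0 ED0 yD0.
have Ey : E *m rm *m y^T = 0.
  by apply/matrixP => a b; rewrite ip_row row_id Ey0 mxE.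
have yy : y *m rm *m y^T = (ip rm y y)%:M.
  by apply/matrixP => a b; rewrite [a]ord1 [b]ord1 ipE !mxE eqxx mulr1n.
have yE_free : row_free (col_mx y E : 'M[R]_(1 + k, k.+1)).
  apply: row_free_of_ker0 => z; rewrite -[z]hsubmxK mul_row_col => z0.
  have /eqP : (lsubmx z *m y + rsubmx z *m E) *m (rm *m y^T) = 0 by rewrite z0 mul0mx.
  rewrite mulmxDl -!mulmxA !(mulmxA y) !(mulmxA E) Ey yy mulmx0 addr0.
  rewrite mul_mx_scalar scaler_eq0 (negbTE yy0) /= => /eqP z1_0.
  move: z0; rewrite z1_0 mul0mx add0r => /eqP; rewrite mulmx_free_eq0 // => /eqP ->.
  by rewrite row_mx0.
apply: (unitmx_orth_eq0 rm_posdef (M := col_mx y E)); first by rewrite -row_free_unit.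
change ((col_mx y E : 'M[R]_(1 + k, k.+1)) *m rm *m D^T = 0).
rewrite !mul_col_mx; apply/eqP; rewrite col_mx_eq0; apply/andP; split.
  by apply/eqP/matrixP => a b; rewrite ip_row !row_id yD0 mxE.
by apply/eqP/matrixP => a b; rewrite ip_row row_id ED0 mxE.
Qed.

Section BilinearFormDerive.
Context {R : realType} {V : normedModType R} {N : nat} (rm : 'M[R]_N).

Lemma is_derive_ip (F H : V -> 'rV[R]_N) w v :
  derivable F w v -> derivable H w v ->
  is_derive w v (fun y => ip rm (F y) (H y))
    (ip rm ('D_v F w) (H w) + ip rm (F w) ('D_v H w)).
Proof.
move=> dF dH; apply: is_derive_eq.
  apply: is_derive_big_sum => p _; apply: is_derive_big_sum => q _.
  apply: is_deriveM; last exact: is_derive_entry.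
  by apply: is_deriveM; exact: is_derive_entry.
rewrite /ip -big_split; apply: eq_bigr => p _; rewrite -big_split.
by apply: eq_bigr => q _ /=; rewrite /GRing.scale /=; ring.
Qed.

End BilinearFormDerive.

(* Locked: otherwise unification unfolds [derive] when comparing distinct partial
   derivatives, which is prohibitively slow. *)
HB.lock Definition dchart2 {R : realType} {m N : nat} (x : 'rV[R]_m -> 'rV[R]_N)
  (a b : 'I_m) : 'rV[R]_m -> 'rV[R]_N := 'D_(ecoord a) (dchart x b).

HB.lock Definition dchart3 {R : realType} {m N : nat} (x : 'rV[R]_m -> 'rV[R]_N)
  (a b d : 'I_m) : 'rV[R]_m -> 'rV[R]_N := 'D_(ecoord a) (dchart2 x b d).

Lemma dchart2E {R : realType} {m N : nat} (x : 'rV[R]_m -> 'rV[R]_N) a b u :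
  'D_(ecoord a) (dchart x b) u = dchart2 x a b u.
Proof. by rewrite dchart2.unlock. Qed.

Lemma dchart3E {R : realType} {m N : nat} (x : 'rV[R]_m -> 'rV[R]_N) a b d u :
  'D_(ecoord a) (dchart2 x b d) u = dchart3 x a b d u.
Proof. by rewrite dchart3.unlock. Qed.

Lemma row_chart_jacobian {R : realType} {m N : nat} (x : 'rV[R]_m -> 'rV[R]_N) a u :
  row a (chart_jacobian x u) = dchart x a u.
Proof. by apply/rowP => p; rewrite !mxE. Qed.

Definition riemann_half {R : realType} {m : nat}
  (gam : 'rV[R]_m -> 'I_m -> 'I_m -> R) (i j k l : 'I_m) (u : 'rV[R]_m) : R :=
  \sum_(a < m) gam u i a *
    (pd k (fun w => christoffel gam a l j w) u
     + \sum_(b < m) christoffel gam a k b u * christoffel gam b l j u).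

Lemma riemannE {R : realType} {m : nat} (gam : 'rV[R]_m -> 'I_m -> 'I_m -> R) i j k l u :
  riemann gam i j k l u = riemann_half gam i j k l u - riemann_half gam i j l k u.
Proof.
(* [ring] runs on fresh variables: on the actual atoms it would unfold derivatives. *)
have regroup (A B X Y : R) : A - B + (X - Y) = A + X - (B + Y) by ring.
rewrite /riemann /riemann_half -sumrB; apply: eq_bigr => a _.
by rewrite sumrB -mulrBr regroup.
Qed.

Section QuasiEuclidean.
Context {R : realType} {N : nat} (rm : 'M[R]_N).

Lemma Sfun_sqr (t : 'rV[R]_N) (r : R) : 0 < r -> Sfun rm t = r -> ip rm t t = r ^+ 2.
Proof.
rewrite /Sfun -/(ip rm t t) => r_gt0 tr; rewrite -tr in r_gt0 *.
case: (ltrP (ip rm t t) 0) => [tt_lt0 | tt_ge0]; last by rewrite sqr_sqrtr.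
by move: r_gt0; rewrite ltr0_sqrtr // ltxx.
Qed.

Lemma sum_Lvec_orth (t e : 'rV[R]_N) : ip rm e t = 0 -> \sum_p Lvec rm t p * e 0 p = 0.
Proof.
move=> et0; have -> : \sum_p Lvec rm t p * e 0 p = ip rm e t / Sfun rm t.
  rewrite /ip big_distrl /=; apply: eq_bigr => p _.
  by rewrite /Lvec mulrAC !big_distrl /=; apply: eq_bigr => q _; ring.
by rewrite et0 mul0r.
Qed.

Lemma nmet_orth (g : R) (t e f : 'rV[R]_N) : ip rm e t = 0 ->
  \sum_p \sum_q nmet g rm t p q * e 0 p * f 0 q = (hpar g ^+ 2)^-1 * ip rm e f.
Proof.
set K := Gpar g ^+ 2 / 4.
move=> et0; have K_part : \sum_p \sum_q K * (Lvec rm t p * e 0 p) * (Lvec rm t q * f 0 q) = 0.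
  under eq_bigr do rewrite -big_distrr /=.
  by rewrite -big_distrl /= -big_distrr /= sum_Lvec_orth // mulr0 mul0r.
transitivity (\sum_p \sum_q ((hpar g ^+ 2)^-1 * (rm p q * e 0 p * f 0 q)
                              - K * (Lvec rm t p * e 0 p) * (Lvec rm t q * f 0 q))).
  by apply: eq_bigr => p _; apply: eq_bigr => q _; rewrite /nmet /K; ring.
under eq_bigr do rewrite sumrB.
by rewrite sumrB K_part subr0 /ip mulr_sumr; under [RHS]eq_bigr do rewrite mulr_sumr.
Qed.

End QuasiEuclidean.

Section SphereChart.
Context {R : realType} {m : nat}.
Variables (rm : 'M[R]_m.+1) (r : R) (U : set 'rV[R]_m) (x : 'rV[R]_m -> 'rV[R]_m.+1).
Hypotheses (rm_sym : rm^T = rm) (U_open : open U) (x_C3 : Ck_on 3 U x).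
Hypothesis x_sphere : forall u, U u -> ip rm (x u) (x u) = r ^+ 2.

Lemma near_U u : U u -> \forall w \near u, U w.
Proof. by move=> Uu; apply: open_nbhs_nbhs. Qed.

Lemma differentiable_chart u : U u -> differentiable x u.
Proof. exact: x_C3.1. Qed.

Lemma differentiable_dchart a u : U u -> differentiable (dchart x a) u.
Proof. exact: (x_C3.2 (ecoord a)).1. Qed.

Lemma differentiable_dchart2 a b u : U u -> differentiable (dchart2 x a b) u.
Proof. rewrite dchart2.unlock; exact: ((x_C3.2 (ecoord b)).2 (ecoord a)).1. Qed.

Lemma dchart2C a b u : U u -> dchart2 x a b u = dchart2 x b a u.
Proof.
move=> Uu; rewrite dchart2.unlock; apply: derive_comm_mx.
- by apply: filterS (near_U Uu); exact: differentiable_chart.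
- exact: differentiable_dchart.
- exact: differentiable_dchart.
Qed.

Lemma dchart3C a b d u : U u -> dchart3 x a b d u = dchart3 x b a d u.
Proof.
move=> Uu; rewrite dchart3.unlock dchart2.unlock; apply: derive_comm_mx.
- by apply: filterS (near_U Uu); exact: differentiable_dchart.
- by have := differentiable_dchart2 b d Uu; rewrite dchart2.unlock.
- by have := differentiable_dchart2 a d Uu; rewrite dchart2.unlock.
Qed.

Lemma ip_dchart_chart a u : U u -> ip rm (dchart x a u) (x u) = 0.
Proof.
move=> Uu; have xx : \forall w \near u, ip rm (x w) (x w) = r ^+ 2.
  by apply: filterS (near_U Uu); exact: x_sphere.
have dx : derivable x u (ecoord a) by apply/diff_derivable/differentiable_chart.
have [_] := is_derive_ip rm dx dx.
rewrite (near_eq_derive _ xx) derive_cst (ip_sym (x u) _ rm_sym) => /eqP.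
by rewrite eq_sym -mulr2n -mulr_natr mulf_eq0 pnatr_eq0 orbF => /eqP.
Qed.

Lemma ip_chart_dchart a u : U u -> ip rm (x u) (dchart x a u) = 0.
Proof. by move=> Uu; rewrite (ip_sym _ _ rm_sym); exact: ip_dchart_chart. Qed.

Lemma ip_chart_dchart2 a b u : U u ->
  ip rm (x u) (dchart2 x a b u) = - ip rm (dchart x a u) (dchart x b u).
Proof.
move=> Uu; have xe : \forall w \near u, ip rm (x w) (dchart x b w) = 0.
  by apply: filterS (near_U Uu) => w Uw; exact: ip_chart_dchart.
have dx : derivable x u (ecoord a) by apply/diff_derivable/differentiable_chart.
have de : derivable (dchart x b) u (ecoord a) by apply/diff_derivable/differentiable_dchart.
have [_] := is_derive_ip rm dx de; rewrite dchart2E.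
rewrite (near_eq_derive _ xe) derive_cst => /esym/eqP.
by rewrite addrC addr_eq0 => /eqP.
Qed.

Lemma ip_dchart2_chart a b u : U u ->
  ip rm (dchart2 x a b u) (x u) = - ip rm (dchart x a u) (dchart x b u).
Proof. by move=> Uu; rewrite (ip_sym _ _ rm_sym); exact: ip_chart_dchart2. Qed.

Lemma induced_metric_sphere (g : R) u : U u -> forall a b,
  induced_metric g rm x u a b = (hpar g ^+ 2)^-1 * ip rm (dchart x a u) (dchart x b u).
Proof. by move=> Uu a b; apply: nmet_orth; exact: ip_dchart_chart. Qed.

Section ConstantMetric.
Hypothesis rm_posdef : forall v, v != 0 -> 0 < ip rm v v.
Hypothesis r_neq0 : r != 0.
Hypothesis x_immersion : forall u, U u -> row_free (chart_jacobian x u).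
Variables (c : R) (gam : 'rV[R]_m -> 'I_m -> 'I_m -> R).
Hypothesis c_neq0 : c != 0.
Hypothesis gamE :
  forall u, U u -> forall a b, gam u a b = c * ip rm (dchart x a u) (dchart x b u).

Lemma near_gamE u a b : U u ->
  \forall w \near u, c * ip rm (dchart x a w) (dchart x b w) = gam w a b.
Proof. by move=> Uu; apply: filterS (near_U Uu) => w Uw; rewrite gamE. Qed.

Lemma gam_sym a b u : U u -> gam u a b = gam u b a.
Proof.
by move=> Uu; rewrite !(gamE Uu); exact: (congr1 (fun z => c * z) (ip_sym _ _ rm_sym)).
Qed.

Lemma is_derive_gam a b d u : U u ->
  is_derive u (ecoord a) (fun w => gam w b d)
    (c * (ip rm (dchart2 x a b u) (dchart x d u) + ip rm (dchart x b u) (dchart2 x a d u))).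
Proof.
move=> Uu; apply: (near_eq_is_derive (f := fun w => c * ip rm (dchart x b w) (dchart x d w))).
  exact: near_gamE.
have de e : derivable (dchart x e) u (ecoord a).
  exact/diff_derivable/differentiable_dchart.
rewrite -!dchart2E; exact: is_deriveZ (is_derive_ip rm (de b) (de d)).
Qed.

Lemma pd_gam a b d u : U u ->
  pd a (fun w => gam w b d) u =
    c * (ip rm (dchart2 x a b u) (dchart x d u) + ip rm (dchart x b u) (dchart2 x a d u)).
Proof. by move=> Uu; rewrite /pd; have [_ ->] := is_derive_gam a b d Uu. Qed.

Lemma gam_unit u : U u -> \matrix_(a, b) gam u a b \in unitmx.
Proof.
move=> Uu; have -> : \matrix_(a, b) gam u a b =
    c *: (chart_jacobian x u *m rm *m (chart_jacobian x u)^T).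
  by apply/matrixP => a b; rewrite [LHS]mxE [RHS]mxE gamE // ip_row !row_chart_jacobian.
by rewrite unitmxZ ?unitfE // gram_unit // x_immersion.
Qed.

Lemma christoffelE a b d u : U u ->
  christoffel gam a b d u =
    c * \sum_s metric_inv gam u a s * ip rm (dchart x s u) (dchart2 x b d u).
Proof.
move=> Uu; rewrite /christoffel !mulr_sumr; apply: eq_bigr => s _.
rewrite !pd_gam // (dchart2C b s Uu) (dchart2C d s Uu) (dchart2C d b Uu).
by rewrite (ip_sym (dchart2 x s d u) _ rm_sym); field.
Qed.

Lemma sum_gam_christoffel a b d u : U u ->
  \sum_t gam u a t * christoffel gam t b d u = c * ip rm (dchart x a u) (dchart2 x b d u).
Proof.
move=> Uu; pose G := \matrix_(i, j) gam u i j.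
pose X s := ip rm (dchart x s u) (dchart2 x b d u).
under eq_bigr do rewrite christoffelE // mulrCA big_distrr /=.
rewrite -big_distrr exchange_big /=; congr (_ * _).
transitivity (\sum_s (G *m invmx G) a s * X s).
  by apply: eq_bigr => s _; rewrite mxE big_distrl; apply: eq_bigr => t _; rewrite !mxE mulrA.
rewrite mulmxV ?gam_unit // (bigD1 a) //= mxE eqxx mul1r big1 ?addr0 // => t ta.
by rewrite mxE eq_sym (negbTE ta) mul0r.
Qed.

Lemma sum_christoffel_ip a b t u : U u ->
  \sum_s christoffel gam s a b u * ip rm (dchart x t u) (dchart x s u) =
    ip rm (dchart x t u) (dchart2 x a b u).
Proof.
move=> Uu; apply/(mulfI c_neq0); rewrite -sum_gam_christoffel // mulr_sumr.
by apply: eq_bigr => s _; rewrite gamE // mulrCA [RHS]mulrC.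
Qed.

Lemma derivable_christoffel a b d e u : U u ->
  derivable (fun w => christoffel gam a b d w) u (ecoord e).
Proof.
move=> Uu; have ChrE : \forall w \near u,
    c * \sum_s metric_inv gam w a s * ip rm (dchart x s w) (dchart2 x b d w) =
    christoffel gam a b d w.
  by apply: filterS (near_U Uu) => w Uw; rewrite christoffelE.
apply: near_eq_derivable ChrE _; apply: derivableM; first exact: derivable_cst.
apply: derivable_big_sum => s _; apply: derivableM.
  apply: (derivable_invmx (A := fun w => \matrix_(i, j) gam w i j)).
    by apply: filterS (near_U Uu) => w Uw; exact: gam_unit.
  by move=> i j; under eq_fun do rewrite mxE; have [] := is_derive_gam e i j Uu.
have dE : derivable (dchart x s) u (ecoord e).
  exact/diff_derivable/differentiable_dchart.
have dE2 : derivable (dchart2 x b d) u (ecoord e).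
  exact/diff_derivable/differentiable_dchart2.
by have [] := is_derive_ip rm dE dE2.
Qed.

Lemma pd_sum_gam_christoffel e a b d u : U u ->
  \sum_t (gam u a t * pd e (fun w => christoffel gam t b d w) u
          + christoffel gam t b d u * pd e (fun w => gam w a t) u) =
    c * (ip rm (dchart2 x e a u) (dchart2 x b d u) + ip rm (dchart x a u) (dchart3 x e b d u)).
Proof.
move=> Uu.
have [_ lhsE] : is_derive u (ecoord e) (fun w => \sum_t gam w a t * christoffel gam t b d w)
    (\sum_t (gam u a t * pd e (fun w => christoffel gam t b d w) u
            + christoffel gam t b d u * pd e (fun w => gam w a t) u)).
  apply: is_derive_big_sum => t _; apply: is_derive_eq => //.
  apply: is_deriveM; apply: derivableP; last exact: derivable_christoffel.
  by have [] := is_derive_gam e a t Uu.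
have [_ rhsE] : is_derive u (ecoord e) (fun w => c * ip rm (dchart x a w) (dchart2 x b d w))
    (c * (ip rm (dchart2 x e a u) (dchart2 x b d u) + ip rm (dchart x a u) (dchart3 x e b d u))).
  have dE : derivable (dchart x a) u (ecoord e).
    exact/diff_derivable/differentiable_dchart.
  have dE2 : derivable (dchart2 x b d) u (ecoord e).
    exact/diff_derivable/differentiable_dchart2.
  apply: is_derive_eq; first exact: is_deriveZ (is_derive_ip rm dE dE2).
  by rewrite dchart2E dchart3E.
rewrite -[LHS]lhsE -[RHS]rhsE; apply: near_eq_derive.
by apply: filterS (near_U Uu) => w Uw; exact: sum_gam_christoffel.
Qed.

Lemma gauss_formula a b u : U u ->
  dchart2 x a b u = \sum_t christoffel gam t a b u *: dchart x t u
                    - (ip rm (dchart x a u) (dchart x b u) / r ^+ 2) *: x u.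
Proof.
move=> Uu; apply/eqP; rewrite -subr_eq0; apply/eqP.
have ipS z : ip rm z (\sum_t christoffel gam t a b u *: dchart x t u) =
    \sum_t christoffel gam t a b u * ip rm z (dchart x t u).
  by rewrite ip_sumr; apply: eq_bigr => t _; rewrite ipZr.
have Ex t : ip rm (row t (chart_jacobian x u)) (x u) = 0.
  by rewrite row_chart_jacobian; exact: ip_dchart_chart.
apply: (orthogonal_frame_eq0 rm_posdef (x_immersion Uu) _ Ex).
- by rewrite (x_sphere Uu) expf_neq0.
- move=> t; rewrite row_chart_jacobian !ipBr ipZr (ip_dchart_chart t Uu) mulr0 subr0 ipS.
  by rewrite (sum_christoffel_ip _ _ _ Uu) subrr.
- rewrite !ipBr ipZr ipS (x_sphere Uu) big1 => [|t _]; last first.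
    by rewrite (ip_chart_dchart _ Uu) mulr0.
  by rewrite (ip_chart_dchart2 _ _ Uu); field.
Qed.

Lemma ip_dchart2_dchart2 a b d e u : U u ->
  ip rm (dchart2 x a b u) (dchart2 x d e u) =
    \sum_t christoffel gam t d e u * ip rm (dchart2 x a b u) (dchart x t u)
    + ip rm (dchart x a u) (dchart x b u) * ip rm (dchart x d u) (dchart x e u) / r ^+ 2.
Proof.
move=> Uu; rewrite {1}(gauss_formula d e Uu) ipBr ipZr ip_sumr (ip_dchart2_chart _ _ Uu).
under eq_bigr do rewrite ipZr.
by rewrite mulrN opprK mulrC mulrA.
Qed.

Lemma riemann_half_sphere i j k l u : U u ->
  riemann_half gam i j k l u =
    c * ip rm (dchart x i u) (dchart3 x k l j u)
    + c / r ^+ 2 * ip rm (dchart x k u) (dchart x i u) * ip rm (dchart x l u) (dchart x j u).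
Proof.
move=> Uu; rewrite /riemann_half.
under eq_bigr do rewrite mulrDr big_distrr /=.
rewrite big_split /= exchange_big /=.
set Z := \sum_a christoffel gam a l j u * ip rm (dchart2 x k i u) (dchart x a u).
set W := \sum_a christoffel gam a l j u * ip rm (dchart x i u) (dchart2 x k a u).
have dG : \sum_a christoffel gam a l j u * pd k (fun w => gam w i a) u = c * Z + c * W.
  rewrite /Z /W !mulr_sumr -big_split /=; apply: eq_bigr => a _.
  by rewrite pd_gam //; ring.
have GCC : \sum_b \sum_a gam u i a * (christoffel gam a k b u * christoffel gam b l j u)
    = c * W.
  rewrite /W mulr_sumr; apply: eq_bigr => b _; under eq_bigr do rewrite mulrA.
  by rewrite -big_distrl /= sum_gam_christoffel //; ring.
have regroup (X A B T : R) : X + (c * Z + c * W) = c * (Z + A * B / r ^+ 2 + T) ->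
    X + c * W = c * T + c / r ^+ 2 * A * B.
  move=> H; have -> : X = c * (Z + A * B / r ^+ 2 + T) - (c * Z + c * W).
    by rewrite -H addrK.
  by ring.
have := pd_sum_gam_christoffel k i l j Uu.
rewrite big_split /= dG (ip_dchart2_dchart2 k i l j Uu) -/Z => GdC.
by rewrite GCC; exact: regroup GdC.
Qed.

Lemma riemann_sphere i j k l u : U u ->
  riemann gam i j k l u = (c * r ^+ 2)^-1 * (gam u i k * gam u j l - gam u i l * gam u j k).
Proof.
have regroup (T A B C D : R) : c * T + c / r ^+ 2 * A * B - (c * T + c / r ^+ 2 * C * D)
    = (c * r ^+ 2)^-1 * (c * A * (c * B) - c * C * (c * D)).
  by field; rewrite r_neq0 c_neq0.
move=> Uu; rewrite riemannE !(riemann_half_sphere _ _ _ _ Uu) (dchart3C k l j Uu).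
rewrite (gam_sym i k Uu) (gam_sym j l Uu) (gam_sym i l Uu) (gam_sym j k Uu) !(gamE Uu).
exact: regroup.
Qed.

End ConstantMetric.

End SphereChart.


Theorem theorem2p17 (R : realType) (n : nat) (rm : 'M[R]_(n.+2)) (g r : R)
  (U : set 'rV[R]_(n.+1)) (x : 'rV[R]_(n.+1) -> 'rV[R]_(n.+2)) :
  rm^T = rm ->
  (forall v : 'rV[R]_(n.+2), v != 0 -> 0 < (v *m rm *m v^T) 0 0) ->
  rm ord_max ord_max = 1 ->
  (forall a : 'I_(n.+2), a != ord_max -> rm ord_max a = 0) ->
  -2 < g < 2 ->
  0 < r ->
  open U ->
  smooth_on U x ->
  (forall u, U u -> Sfun rm (x u) = r) ->
  (forall u, U u -> row_free (chart_jacobian x u)) ->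
  forall u, U u -> forall i j k l : 'I_(n.+1),
    riemann (induced_metric g rm x) i j k l u =
      hpar g ^+ 2 / r ^+ 2 *
        (induced_metric g rm x u i k * induced_metric g rm x u j l
         - induced_metric g rm x u i l * induced_metric g rm x u j k).
Proof.
move=> rm_sym rm_posdef _ _ /andP[g_gtN2 g_lt2] r_gt0 U_open x_smooth x_S x_free u Uu i j k l.
have h_gt0 : 0 < hpar g by rewrite sqrtr_gt0; nra.
have c_neq0 : (hpar g ^+ 2)^-1 != 0 by rewrite invr_eq0 expf_neq0 // gt_eqF.
have x_sphere w : U w -> ip rm (x w) (x w) = r ^+ 2.
  by move=> Uw; apply: Sfun_sqr => //; exact: x_S.
have ip_posdef v : v != 0 -> 0 < ip rm v v by move=> /rm_posdef; rewrite ipE.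
have gamE := induced_metric_sphere rm_sym U_open (x_smooth 3) x_sphere g.
rewrite (riemann_sphere rm_sym U_open (x_smooth 3) x_sphere ip_posdef (lt0r_neq0 r_gt0)
  x_free c_neq0 gamE i j k l Uu).
by congr (_ * _); field; rewrite !gt_eqF.
Qed.
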